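(* Let $n\ge2$ be an integer and $\lambda>0$, and let $\gamma(t)=(\omega(t),x(t),y(t))$, $t\in(S,T)$ the maximal interval of existence, be a solution with $\omega>0$ of the system $$\frac{d\omega}{dt}=x\omega,\qquad \frac{dx}{dt}=x^2-xy+n-1-\lambda\omega^2,\qquad \frac{dy}{dt}=xy-nx^2-\lambda\omega^2.$$ Then the quantity $Q=y/\omega$ is strictly decreasing along $\gamma$. If moreover $\int_{t_0}^T\omega(\sigma)\,d\sigma=\infty$ for some (equivalently every) $t_0\in(S,T)$, then $\lim_{t\to T}Q(t)=-\infty$; in particular $y(t)<0$ for all $t$ sufficiently close to $T$. *)

From Stdlib Require Import Reals.
From Coquelicot Require Import Coquelicot.
Open Scope R_scope.

Definition in_ivl (S T : Rbar) (t : R) : Prop := Rbar_lt S t /\ Rbar_lt t T.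

Definition is_solution (n : nat) (lam : R) (S T : Rbar)
    (omega x y : R -> R) : Prop :=
  forall t, in_ivl S T t ->
    is_derive omega t (x t * omega t) /\
    is_derive x t (x t ^ 2 - x t * y t + INR n - 1 - lam * omega t ^ 2) /\
    is_derive y t (x t * y t - INR n * x t ^ 2 - lam * omega t ^ 2).

Definition is_maximal_solution (n : nat) (lam : R) (S T : Rbar)
    (omega x y : R -> R) : Prop :=
  is_solution n lam S T omega x y /\
  forall (S' T' : Rbar) (omega' x' y' : R -> R),
    Rbar_le S' S -> Rbar_le T T' ->
    is_solution n lam S' T' omega' x' y' ->
    (forall t, in_ivl S T t -> omega' t = omega t /\ x' t = x t /\ y' t = y t) ->
    S' = S /\ T' = T.

(* int_{t0}^T omega = +infinity, stated via the partial integrals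
   (which are increasing since omega > 0): they are unbounded as t -> T. *)
Definition integral_diverges_at_T (omega : R -> R) (t0 : R) (T : Rbar) : Prop :=
  forall M : R, exists t, t0 < t /\ Rbar_lt t T /\ M < RInt omega t0 t.

(* Along a solution, Q = y/omega satisfies Q' = -n x^2/omega - lam omega <= -lam omega < 0,
   so Q is strictly decreasing, and integrating this bound gives
   Q t <= Q t0 - lam * int_{t0}^t omega, which tends to -infinity when the integral of
   omega diverges. *)
From Stdlib Require Import Reals Lra Psatz.
From Coquelicot Require Import Coquelicot.
Open Scope R_scope.

Lemma in_ivl_between (S T : Rbar) (a b s : R) :
  in_ivl S T a -> in_ivl S T b -> a <= s <= b -> in_ivl S T s.
Proof. unfold in_ivl; destruct S, T; simpl; intros; lra. Qed.

Lemma in_ivl_right (S T : Rbar) (a t : R) :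
  in_ivl S T a -> a <= t -> Rbar_lt t T -> in_ivl S T t.
Proof. unfold in_ivl; destruct S; simpl; intros; intuition lra. Qed.

Lemma is_derive_continuity_pt (f : R -> R) (t l : R) :
  is_derive f t l -> continuity_pt f t.
Proof.
  intro Hf. apply continuity_pt_filterlim.
  apply (ex_derive_continuous (K := R_AbsRing) (V := R_NormedModule)).
  exists l; exact Hf.
Qed.

Lemma is_derive_neg_decreasing (f f' : R -> R) (a b : R) :
  a < b ->
  (forall z, a <= z <= b -> is_derive f z (f' z)) ->
  (forall z, a <= z <= b -> f' z < 0) ->
  f b < f a.
Proof.
  intros Hab Hder Hneg.
  destruct (MVT_gen f a b f') as [c [Hc Hmvt]].
  - intros z Hz. rewrite Rmin_left, Rmax_right in Hz by lra. apply Hder; lra.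
  - intros z Hz. rewrite Rmin_left, Rmax_right in Hz by lra.
    apply (is_derive_continuity_pt _ _ (f' z)), Hder; lra.
  - rewrite Rmin_left, Rmax_right in Hc by lra.
    assert (Hc' := Hneg c Hc). nra.
Qed.

Lemma is_derive_le_RInt (f f' h : R -> R) (a b : R) :
  a <= b ->
  (forall z, a <= z <= b -> is_derive f z (f' z)) ->
  (forall z, a <= z <= b -> continuous f' z) ->
  ex_RInt h a b ->
  (forall z, a < z < b -> f' z <= h z) ->
  f b - f a <= RInt h a b.
Proof.
  intros Hab Hder Hcont Hh Hle.
  assert (Hftc : is_RInt f' a b (f b - f a)).
  { apply (is_RInt_derive f f');
      intros z Hz; rewrite Rmin_left, Rmax_right in Hz by lra; auto. }
  rewrite <- (is_RInt_unique _ _ _ _ Hftc).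
  apply RInt_le; auto. exists (f b - f a); exact Hftc.
Qed.

Section RatioAlongSolution.

Variables (n : nat) (lam : R) (S T : Rbar) (omega x y : R -> R).
Hypothesis hlam : 0 < lam.
Hypothesis hsol : is_solution n lam S T omega x y.
Hypothesis hpos : forall t, in_ivl S T t -> 0 < omega t.

Definition Q (t : R) : R := y t / omega t.

Definition dQ (t : R) : R := - (INR n * (x t * x t) / omega t) - lam * omega t.

Lemma is_derive_Q (t : R) : in_ivl S T t -> is_derive Q t (dQ t).
Proof.
  intro Ht. destruct (hsol t Ht) as [Hw [_ Hy]]. assert (Hwt := hpos t Ht).
  replace (dQ t) with
    (((x t * y t - INR n * x t ^ 2 - lam * omega t ^ 2) * omega t
      - y t * (x t * omega t)) / omega t ^ 2)
    by (unfold dQ; field; lra).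
  apply is_derive_div; auto; lra.
Qed.

Lemma dQ_le (t : R) : in_ivl S T t -> dQ t <= - lam * omega t.
Proof.
  intro Ht. assert (Hwt := hpos t Ht). unfold dQ.
  assert (0 <= INR n * (x t * x t) / omega t).
  { apply Rdiv_le_0_compat; [apply Rmult_le_pos; [apply pos_INR | nra] | lra]. }
  lra.
Qed.

Lemma dQ_neg (t : R) : in_ivl S T t -> dQ t < 0.
Proof.
  intro Ht. assert (Hwt := hpos t Ht). assert (Hle := dQ_le t Ht). nra.
Qed.

Lemma continuous_dQ (t : R) : in_ivl S T t -> continuous dQ t.
Proof.
  intro Ht. destruct (hsol t Ht) as [Hw [Hx _]]. assert (Hwt := hpos t Ht).
  apply is_derive_continuity_pt in Hw. apply is_derive_continuity_pt in Hx.
  apply continuity_pt_filterlim. unfold dQ.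
  apply continuity_pt_minus.
  - apply continuity_pt_opp, continuity_pt_div; [| exact Hw | lra].
    apply continuity_pt_mult; [apply continuity_pt_const; now intros ? ? |].
    now apply continuity_pt_mult.
  - apply continuity_pt_mult; [apply continuity_pt_const; now intros ? ? | exact Hw].
Qed.

Lemma Q_decreasing (s t : R) :
  in_ivl S T s -> in_ivl S T t -> s < t -> Q t < Q s.
Proof.
  intros Hs Ht Hst. apply (is_derive_neg_decreasing Q dQ); auto; intros z Hz.
  - apply is_derive_Q, (in_ivl_between S T s t); auto.
  - apply dQ_neg, (in_ivl_between S T s t); auto.
Qed.

Lemma Q_drop_le_integral (t0 t : R) :
  in_ivl S T t0 -> t0 <= t -> Rbar_lt t T ->
  Q t - Q t0 <= - lam * RInt omega t0 t.
Proof.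
  intros Ht0 Hle HT.
  assert (Hin : forall z, t0 <= z <= t -> in_ivl S T z).
  { intros z Hz. apply (in_ivl_right S T t0); [exact Ht0 | lra |].
    destruct T; simpl in *; auto; lra. }
  assert (Hw : ex_RInt omega t0 t).
  { apply (ex_RInt_continuous (V := R_CompleteNormedModule)). intros z Hz.
    rewrite Rmin_left, Rmax_right in Hz by lra.
    destruct (hsol z (Hin z Hz)) as [Hwz _].
    apply continuity_pt_filterlim, (is_derive_continuity_pt _ _ _ Hwz). }
  replace (- lam * RInt omega t0 t)
    with (RInt (fun z => scal (- lam) (omega z)) t0 t)
    by exact (RInt_scal omega t0 t (- lam) Hw).
  apply (is_derive_le_RInt Q dQ).
  - exact Hle.
  - intros z Hz. apply is_derive_Q, Hin; exact Hz.
  - intros z Hz. apply continuous_dQ, Hin; exact Hz.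
  - exact (ex_RInt_scal (V := R_NormedModule) omega t0 t (- lam) Hw).
  - intros z Hz. apply dQ_le, Hin; lra.
Qed.

Lemma Q_tends_to_minus_infty (t0 : R) :
  in_ivl S T t0 -> integral_diverges_at_T omega t0 T ->
  forall M : R, exists t1, in_ivl S T t1 /\
    forall t, t1 < t -> Rbar_lt t T -> Q t < M.
Proof.
  intros Ht0 Hdiv M.
  destruct (Hdiv ((Q t0 - M) / lam)) as [t1 [Ht01 [Ht1T Hint]]].
  assert (Ht1 : in_ivl S T t1) by (apply (in_ivl_right S T t0); auto; lra).
  exists t1. split; [exact Ht1 |]. intros t Ht1t HtT.
  assert (Ht : in_ivl S T t) by (apply (in_ivl_right S T t1); auto; lra).
  assert (Hdec := Q_decreasing t1 t Ht1 Ht Ht1t).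
  assert (Hdrop := Q_drop_le_integral t0 t1 Ht0 (Rlt_le _ _ Ht01) Ht1T).
  assert (Hlam : Q t0 - M < lam * RInt omega t0 t1).
  { replace (Q t0 - M) with (lam * ((Q t0 - M) / lam)) by (field; lra).
    apply Rmult_lt_compat_l; assumption. }
  lra.
Qed.

End RatioAlongSolution.

Theorem lemma3p5 (n : nat) (lam : R) (S T : Rbar) (omega x y : R -> R)
  (hn : (2 <= n)%nat) (hlam : 0 < lam)
  (hsol : is_maximal_solution n lam S T omega x y)
  (hpos : forall t, in_ivl S T t -> 0 < omega t) :
  (forall s t, in_ivl S T s -> in_ivl S T t -> s < t ->
     y t / omega t < y s / omega s) /\
  ((exists t0, in_ivl S T t0 /\ integral_diverges_at_T omega t0 T) ->
     (forall M : R, exists t1, in_ivl S T t1 /\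
        forall t, t1 < t -> Rbar_lt t T -> y t / omega t < M) /\
     (exists t1, in_ivl S T t1 /\
        forall t, t1 < t -> Rbar_lt t T -> y t < 0)).
Proof.
  destruct hsol as [hs _].
  split; [exact (Q_decreasing n lam S T omega x y hlam hs hpos) |].
  intros [t0 [Ht0 Hdiv]].
  assert (HQ := Q_tends_to_minus_infty n lam S T omega x y hlam hs hpos t0 Ht0 Hdiv).
  split; [exact HQ |].
  destruct (HQ 0) as [t1 [Ht1 HQ0]].
  exists t1. split; [exact Ht1 |]. intros t Ht1t HtT.
  assert (Hwt := hpos t (in_ivl_right S T t1 t Ht1 (Rlt_le _ _ Ht1t) HtT)).
  assert (HQt := HQ0 t Ht1t HtT). unfold Q in HQt.
  replace (y t) with (y t / omega t * omega t) by (field; lra).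
  nra.
Qed.
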